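(* Let $(T,f,(\le_h))$ be an ordered merge tree and $\sigma\colon[0,1]\to T$ a weak in-order curve on $T$. If $t_1\le t_2$ and $\sigma(t_1)=\sigma(t_2)=x$, then every $t\in[t_1,t_2]$ with $f(\sigma(t))=f(x)$ satisfies $\sigma(t)=x$.
   Context: A merge tree $(T,f)$: a finite rooted tree $T$ identified with its topological realisation, with a continuous $f\colon T\to\mathbb{R}\cup\{\infty\}$ strictly increasing towards the root, $f(v)=\infty$ iff $v$ is the root; lowest leaf at height $0$. $\mathrm{anc}_h(x)$ is the unique ancestor of $x$ at height $h\ge f(x)$ (ancestor: reachable by an $f$-increasing path); $\mathbb{L}_h=\{x:f(x)=h\}$. A layer-order is a family $(\le_h)_{h\ge0}$ of total orders on the $\mathbb{L}_h$ that is consistent ($h_1\le h_2$, $x_1\le_{h_1}x_2$ imply $\mathrm{anc}_{h_2}(x_1)\le_{h_2}\mathrm{anc}_{h_2}(x_2)$); $(T,f,(\le_h))$ is an ordered merge tree, and $<_h$ is the strict order of $\le_h$. A weak in-order curve on $T$ is a continuous $\sigma\colon[0,1]\to T$ starting and ending at the root such that for all $t_1,t_2\in[0,1]$ with $f(\sigma(t_1))=f(\sigma(t_2))=h$ and $\sigma(t_1)<_h\sigma(t_2)$ we have $t_1<t_2$. *)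

From Stdlib Require Import Reals List.
From Coquelicot Require Import Rbar.
Open Scope R_scope.

(* A merge tree, given combinatorially: a finite rooted tree (vertex type V,
   every vertex reaches the root by iterating [parent]) with heights on the
   non-root vertices, strictly increasing towards the root; the root has
   height +∞; the lowest leaf is at height 0. *)
Record MergeTree := {
  V : Type;
  V_finite : exists l : list V, forall v, In v l;
  root : V;
  parent : V -> V;
  parent_root : parent root = root;
  rooted : forall v, exists n, Nat.iter n parent v = root;
  hv : V -> R;
  hv_incr : forall v, v <> root -> parent v <> root -> hv v < hv (parent v);
  hv_nonneg : forall v, v <> root -> 0 <= hv v;
  hv_zero : exists v, v <> root /\ hv v = 0
}.

Section Realisation.
Variable M : MergeTree.

(* Points of the topological realisation: the root, or a point (v,h) on the
   half-open edge from the non-root vertex v (included) up to its parent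
   (excluded), at height h; the edge to the root is [hv v, +∞). *)
Definition is_edge_pt (p : V M * R) : Prop :=
  fst p <> root M /\ hv M (fst p) <= snd p /\
  (parent M (fst p) = root M \/ snd p < hv M (parent M (fst p))).

Definition point : Type := option {p : V M * R | is_edge_pt p}.

Definition root_pt : point := None.

Definition height (x : point) : Rbar :=
  match x with
  | None => p_infty
  | Some p => Finite (snd (proj1_sig p))
  end.

Definition vanc (v w : V M) : Prop := exists n, Nat.iter n (parent M) v = w.

(* y is an ancestor of x: reachable from x by an f-increasing path *)
Definition ancestor (x y : point) : Prop :=
  match x, y with
  | None, None => True
  | None, Some _ => False
  | Some _, None => True
  | Some p, Some q =>
      vanc (fst (proj1_sig p)) (fst (proj1_sig q)) /\
      snd (proj1_sig p) <= snd (proj1_sig q)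
  end.

Definition anc_at (h : R) (x y : point) : Prop := ancestor x y /\ height y = Finite h.

(* Topology of the realisation: induced by the metric
     d(x,y) = 2 g(f(lca x y)) - g(height x) - g(height y),
   with g : [0,∞] -> [0,1], g h = h/(1+h), g ∞ = 1 (a homeomorphic
   reparametrisation of heights, making the realisation a compact metric
   tree with the root as the point at height ∞).  Since the set of heights
   of common ancestors is [f(lca), ∞], "d(x,y) < e" is equivalent to the
   existence of a common ancestor z with 2 g(height z) - g(height x) - g(height y) < e. *)
Definition g (h : Rbar) : R :=
  match h with
  | Finite r => r / (1 + r)
  | _ => 1
  end.

Definition dist_lt (x y : point) (e : R) : Prop :=
  exists z, ancestor x z /\ ancestor y z /\ 2 * g (height z) - g (height x) - g (height y) < e.

Definition continuous_on01 (sigma : R -> point) : Prop :=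
  forall t, 0 <= t <= 1 -> forall e, 0 < e -> exists d, 0 < d /\
    forall t', 0 <= t' <= 1 -> Rabs (t' - t) < d -> dist_lt (sigma t) (sigma t') e.

Definition layer_order (le : R -> point -> point -> Prop) : Prop :=
  (forall h x y, le h x y -> 0 <= h /\ height x = Finite h /\ height y = Finite h) /\
  (forall h x, 0 <= h -> height x = Finite h -> le h x x) /\
  (forall h x y, le h x y -> le h y x -> x = y) /\
  (forall h x y z, le h x y -> le h y z -> le h x z) /\
  (forall h x y, 0 <= h -> height x = Finite h -> height y = Finite h -> le h x y \/ le h y x) /\
  (forall h1 h2 x1 x2 y1 y2, h1 <= h2 -> le h1 x1 x2 ->
     anc_at h2 x1 y1 -> anc_at h2 x2 y2 -> le h2 y1 y2).

Definition strict (le : R -> point -> point -> Prop) (h : R) (x y : point) : Prop :=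
  le h x y /\ x <> y.

(* weak in-order curve sigma : [0,1] -> T (values outside [0,1] irrelevant) *)
Definition weak_in_order_curve (le : R -> point -> point -> Prop)
  (sigma : R -> point) : Prop :=
  continuous_on01 sigma /\ sigma 0 = root_pt /\ sigma 1 = root_pt /\
  forall t1 t2 h, 0 <= t1 <= 1 -> 0 <= t2 <= 1 ->
    height (sigma t1) = Finite h -> height (sigma t2) = Finite h ->
    strict le h (sigma t1) (sigma t2) -> t1 < t2.

End Realisation.

(* If sigma t lay at the height h of x but differed from x, the layer order
   would compare it with x: being above x forces t > t2, being below forces
   t < t1.  The root is the only point at height +oo, so there is nothing to
   show there. *)
From Stdlib Require Import Reals Lra Classical.
From Coquelicot Require Import Rbar.
Open Scope R_scope.

Lemma point_root_or_height_nonneg (M : MergeTree) (x : point M) :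
  x = root_pt M \/ exists h, 0 <= h /\ height M x = Finite h.
Proof.
  destruct x as [[[v h] Hedge]|]; [right | now left].
  exists h; split; [| reflexivity].
  destruct Hedge as [Hv [Hvh _]]; simpl in *.
  pose proof (hv_nonneg M v Hv); lra.
Qed.

Lemma height_p_infty_root (M : MergeTree) (x : point M) :
  height M x = p_infty -> x = root_pt M.
Proof. destruct x; [discriminate | reflexivity]. Qed.

Section WeakInOrderCurve.
Variables (M : MergeTree) (le : R -> point M -> point M -> Prop).
Hypothesis Hle : layer_order M le.
Variable sigma : R -> point M.
Hypothesis Hsigma : weak_in_order_curve M le sigma.

Lemma weak_in_order_curve_lt (s t h : R) :
  0 <= s <= 1 -> 0 <= t <= 1 ->
  height M (sigma s) = Finite h -> height M (sigma t) = Finite h ->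
  le h (sigma s) (sigma t) -> sigma s <> sigma t -> s < t.
Proof.
  destruct Hsigma as [_ [_ [_ Horder]]].
  intros Hs Ht Hhs Hht Hst Hneq.
  exact (Horder s t h Hs Ht Hhs Hht (conj Hst Hneq)).
Qed.

Lemma weak_in_order_curve_layer_const (t1 t t2 h : R) :
  0 <= t1 -> t1 <= t <= t2 -> t2 <= 1 -> 0 <= h ->
  sigma t1 = sigma t2 -> height M (sigma t1) = Finite h ->
  height M (sigma t) = Finite h -> sigma t = sigma t1.
Proof.
  intros H1 Ht H2 Hh E Hh1 Hht.
  destruct (classic (sigma t = sigma t1)) as [| Hneq]; [assumption | exfalso].
  destruct Hle as [_ [_ [_ [_ [Htotal _]]]]].
  destruct (Htotal h (sigma t1) (sigma t) Hh Hh1 Hht) as [Habove | Hbelow].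
  - assert (Hlt : t2 < t).
    { rewrite E in Habove, Hh1.
      apply (weak_in_order_curve_lt t2 t h); try lra; try assumption.
      now rewrite <- E; intros C; apply Hneq. }
    lra.
  - assert (Hlt : t < t1)
      by (apply (weak_in_order_curve_lt t t1 h); try lra; assumption).
    lra.
Qed.

End WeakInOrderCurve.

Theorem lemma19 (M : MergeTree) (le : R -> point M -> point M -> Prop)
  (Hle : layer_order M le) (sigma : R -> point M)
  (Hsigma : weak_in_order_curve M le sigma)
  (t1 t2 : R) (x : point M) :
  0 <= t1 -> t1 <= t2 -> t2 <= 1 ->
  sigma t1 = x -> sigma t2 = x ->
  forall t, t1 <= t <= t2 -> height M (sigma t) = height M x -> sigma t = x.
Proof.
  intros H1 H12 H2 E1 E2 t Ht Hheight.
  destruct (point_root_or_height_nonneg M x) as [Hroot | [h [Hh Hx]]].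
  - subst x; rewrite Hroot in Hheight |- *.
    now apply height_p_infty_root.
  - subst x; rewrite Hx in Hheight.
    apply (weak_in_order_curve_layer_const M le Hle sigma Hsigma t1 t t2 h);
      try assumption; congruence.
Qed.
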